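(* Let $d/2<k<d$ be integers. For all $t>0$, $g(t)\big(t\,g''(t)+g'(t)\big)>t\,(g'(t))^2$; consequently the function $t\mapsto t g'(t)/g(t)$ is strictly increasing on $(0,\infty)$.
   Context: $g(t)=\binom dk^{-1}\sum_{j=0}^{d-k}\binom kj\binom{d-k}{j}t^j$. *)

From HB Require Import structures.
From mathcomp Require Import all_boot all_order all_algebra.
Set Implicit Arguments. Unset Strict Implicit. Unset Printing Implicit Defensive.
Import Order.TTheory GRing.Theory Num.Theory.
Local Open Scope ring_scope.

(* g(t) = C(d,k)^{-1} * sum_{j=0}^{d-k} C(k,j) C(d-k,j) t^j, as a polynomial
   over a real field R.  Its derivatives g', g'' are the (formal = analytic)
   polynomial derivatives. *)
Definition gpoly (R : fieldType) (d k : nat) : {poly R} :=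
  (('C(d, k))%:R)^-1 *:
    \sum_(j < (d - k).+1) (('C(k, j) * 'C(d - k, j))%:R *: 'X^j).

From HB Require Import structures.
From mathcomp Require Import all_boot all_order all_algebra.
From mathcomp Require Import ring zify.
Set Implicit Arguments. Unset Strict Implicit. Unset Printing Implicit Defensive.
Import Order.TTheory GRing.Theory Num.Theory.
Local Open Scope ring_scope.

(* Write g(t) = \sum_{j <= m} c_j t^j with m = d - k and
   c_j = C(d,k)^{-1} C(k,j) C(m,j) >= 0; since d/2 < k < d, both c_0 and c_1
   are positive.  With the weights x_j = c_j t^j (t > 0) the Euler operator
   t d/dt gives
     g(t) = \sum x_j,   t g'(t) = \sum j x_j,   t^2 g''(t) + t g'(t) = \sum j^2 x_j.
   Multiplying the first claim by t, it becomes the strict Cauchy-Schwarz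
   (variance) inequality (\sum j x_j)^2 < (\sum x_j)(\sum j^2 x_j), strict
   because x_0, x_1 > 0 carry distinct values j.  The second claim says that
   the weighted mean of j under the weights c_j t^j increases with t; cross-
   multiplied, it is a Chebyshev-type double-sum inequality.  Both double-sum
   inequalities follow from one symmetrization lemma: a double sum whose
   symmetrized terms are nonnegative, one of them positive, is positive. *)

Section PolySum.
Variable R : realFieldType.
Implicit Types (n : nat) (c x w : nat -> R) (s t : R).

Definition poly_sum n c : {poly R} := \sum_(j < n) c j *: 'X^j.

Lemma horner_poly_sum n c t : (poly_sum n c).[t] = \sum_(j < n) c j * t ^+ j.
Proof. by rewrite horner_sum; apply: eq_bigr => j _; rewrite hornerZ hornerXn. Qed.

Lemma euler_derivn n c m t :
  t ^+ m * (poly_sum n c)^`(m).[t] = \sum_(j < n) c j * t ^+ j *+ j ^_ m.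
Proof.
rewrite raddf_sum horner_sum mulr_sumr; apply: eq_bigr => j _ /=.
rewrite derivnZ derivnXn hornerZ hornerMn hornerXn.
case: (leqP m j) => [le_mj | lt_jm]; last by rewrite ffact_small // !mulr0n !mulr0.
have -> : t ^+ j = t ^+ m * t ^+ (j - m) by rewrite -exprD subnKC.
by rewrite !mulrnAr mulrCA.
Qed.

Lemma euler_deriv1 n c t :
  t * (poly_sum n c)^`().[t] = \sum_(j < n) c j * t ^+ j * j%:R.
Proof.
rewrite -derivn1 -[t in t * _]expr1 euler_derivn.
by apply: eq_bigr => j _; rewrite ffactn1 mulr_natr.
Qed.

(* j^_2 + j = j^2 turns the second Euler operator into the weight j^2. *)
Lemma ffact2_add j : (j ^_ 2 + j)%N = (j * j)%N.
Proof. by case: j => [|j] //; rewrite ffactSS ffactn1; lia. Qed.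

Lemma euler_deriv2 n c t :
  t ^+ 2 * (poly_sum n c)^`(2).[t] + t * (poly_sum n c)^`().[t]
  = \sum_(j < n) c j * t ^+ j * j%:R ^+ 2.
Proof.
rewrite euler_deriv1 euler_derivn -big_split /=.
by apply: eq_bigr => j _; rewrite mulr_natr -mulrnDr ffact2_add -natrX mulr_natr mulnn.
Qed.

Lemma double_sum_gt0 n (F : nat -> nat -> R) i0 j0 :
  (i0 < n)%N -> (j0 < n)%N ->
  (forall i j, (i < n)%N -> (j < n)%N -> 0 <= F i j + F j i) ->
  0 < F i0 j0 + F j0 i0 -> 0 < \sum_(i < n) \sum_(j < n) F i j.
Proof.
move=> lt_i0n lt_j0n F_ge0 F_gt0.
have symmetrize : \sum_(i < n) \sum_(j < n) (F i j + F j i)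
    = (\sum_(i < n) \sum_(j < n) F i j) *+ 2.
  rewrite (eq_bigr _ (fun i _ => big_split _ _ _ _ _)) big_split /=.
  by rewrite [X in _ + X]exchange_big mulr2n.
suff : 0 < \sum_(i < n) \sum_(j < n) (F i j + F j i) by rewrite symmetrize pmulrn_lgt0.
rewrite (bigD1 (Ordinal lt_i0n)) //= (bigD1 (Ordinal lt_j0n)) //= -addrA ltr_pwDl //.
by apply: addr_ge0; apply: sumr_ge0 => i _; [|apply: sumr_ge0 => j _]; exact: F_ge0.
Qed.

Lemma cauchy_schwarz_strict n x w i0 j0 : (i0 < n)%N -> (j0 < n)%N ->
  (forall j, (j < n)%N -> 0 <= x j) -> 0 < x i0 -> 0 < x j0 -> w i0 != w j0 ->
  (\sum_(j < n) x j * w j) ^+ 2 < (\sum_(j < n) x j) * (\sum_(j < n) x j * w j ^+ 2).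
Proof.
move=> lt_i0n lt_j0n x_ge0 x_i0 x_j0 w_neq; rewrite -subr_gt0.
have -> : (\sum_(j < n) x j) * (\sum_(j < n) x j * w j ^+ 2) - (\sum_(j < n) x j * w j) ^+ 2
   = \sum_(i < n) \sum_(j < n) (x i * x j * (w j ^+ 2 - w i * w j)).
  rewrite expr2 !mulr_suml -sumrB; apply: eq_bigr => i _.
  by rewrite !mulr_sumr -sumrB; apply: eq_bigr => j _; ring.
have pair_sq i j : x i * x j * (w j ^+ 2 - w i * w j) + x j * x i * (w i ^+ 2 - w j * w i)
    = x i * x j * (w i - w j) ^+ 2 by ring.
apply: (@double_sum_gt0 n (fun i j => x i * x j * (w j ^+ 2 - w i * w j)) _ _
  lt_i0n lt_j0n) => [i j lt_in lt_jn|]; rewrite pair_sq.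
  by rewrite mulr_ge0 ?sqr_ge0 // mulr_ge0 ?x_ge0.
apply: mulr_gt0; first exact: mulr_gt0.
by rewrite lt_def sqr_ge0 sqrf_eq0 subr_eq0 w_neq.
Qed.

Lemma cross_expr_ge0 s t i j : 0 <= s -> s <= t -> (i <= j)%N ->
  0 <= t ^+ j * s ^+ i - s ^+ j * t ^+ i.
Proof.
move=> s_ge0 le_st le_ij; have t_ge0 : 0 <= t by apply: le_trans le_st.
rewrite -(subnKC le_ij) !exprD subr_ge0.
rewrite [_ * _ * s ^+ i]mulrAC [_ * _ * t ^+ i]mulrAC [s ^+ i * t ^+ i]mulrC.
by rewrite ler_wpM2l ?mulr_ge0 ?exprn_ge0 // lerXn2r // nnegrE.
Qed.

Lemma exponent_cross_ge0 s t i j : 0 <= s -> s <= t ->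
  0 <= (i%:R - j%:R) * (t ^+ i * s ^+ j - s ^+ i * t ^+ j).
Proof.
move=> s_ge0 le_st; case: (leqP j i) => [le_ji | /ltnW le_ij].
  by apply: mulr_ge0; [rewrite subr_ge0 ler_nat | exact: cross_expr_ge0].
rewrite -mulrNN !opprB [s ^+ i * _]mulrC [t ^+ i * _]mulrC.
by apply: mulr_ge0; [rewrite subr_ge0 ler_nat | exact: cross_expr_ge0].
Qed.

Lemma weighted_mean_increasing n c s t : 0 <= s -> s < t -> (1 < n)%N ->
  (forall j, (j < n)%N -> 0 <= c j) -> 0 < c 0%N -> 0 < c 1%N ->
  (\sum_(j < n) c j * s ^+ j * j%:R) * (\sum_(j < n) c j * t ^+ j)
  < (\sum_(j < n) c j * t ^+ j * j%:R) * (\sum_(j < n) c j * s ^+ j).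
Proof.
move=> s_ge0 lt_st lt_1n c_ge0 c0_gt0 c1_gt0; rewrite -subr_gt0.
have -> : (\sum_(j < n) c j * t ^+ j * j%:R) * (\sum_(j < n) c j * s ^+ j)
  - (\sum_(j < n) c j * s ^+ j * j%:R) * (\sum_(j < n) c j * t ^+ j)
   = \sum_(i < n) \sum_(j < n) (c i * c j * i%:R * (t ^+ i * s ^+ j - s ^+ i * t ^+ j)).
  rewrite !mulr_suml -sumrB; apply: eq_bigr => i _.
  by rewrite !mulr_sumr -sumrB; apply: eq_bigr => j _; ring.
have pair_eq i j : c i * c j * i%:R * (t ^+ i * s ^+ j - s ^+ i * t ^+ j)
    + c j * c i * j%:R * (t ^+ j * s ^+ i - s ^+ j * t ^+ i)
    = c i * c j * ((i%:R - j%:R) * (t ^+ i * s ^+ j - s ^+ i * t ^+ j)) by ring.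
apply: (@double_sum_gt0 n
    (fun i j => c i * c j * i%:R * (t ^+ i * s ^+ j - s ^+ i * t ^+ j)) _ _
    lt_1n (ltnW lt_1n)) => /= [i j lt_in lt_jn|]; last first.
  by rewrite !expr0 !expr1 !mulr0 !mul0r !addr0 !mulr1 !mulr_gt0 // subr_gt0.
rewrite pair_eq; apply: mulr_ge0; first by rewrite mulr_ge0 ?c_ge0.
exact: exponent_cross_ge0 s_ge0 (ltW lt_st).
Qed.

Section Coefficients.
Variables (n : nat) (c : nat -> R).
Hypotheses (lt_1n : (1 < n)%N) (c_ge0 : forall j, 0 <= c j).
Hypotheses (c0_gt0 : 0 < c 0%N) (c1_gt0 : 0 < c 1%N).
Let p := poly_sum n c.

(* p is positive on t > 0 (its constant term is), so dividing by p is safe. *)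
Lemma poly_sum_gt0 t : 0 < t -> 0 < p.[t].
Proof.
move=> t_gt0; rewrite horner_poly_sum.
case: n lt_1n => // n' _; rewrite big_ord_recl /= expr0 mulr1 ltr_pwDl //.
by apply: sumr_ge0 => j _; rewrite mulr_ge0 // exprn_ge0 // ltW.
Qed.

Lemma poly_sum_log_convex t : 0 < t ->
  t * p^`().[t] ^+ 2 < p.[t] * (t * p^`(2).[t] + p^`().[t]).
Proof.
move=> t_gt0; rewrite -(ltr_pM2l t_gt0).
have -> : t * (t * p^`().[t] ^+ 2) = (t * p^`().[t]) ^+ 2 by ring.
have -> : t * (p.[t] * (t * p^`(2).[t] + p^`().[t]))
    = p.[t] * (t ^+ 2 * p^`(2).[t] + t * p^`().[t]) by ring.
rewrite euler_deriv2 euler_deriv1 horner_poly_sum.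
apply: (@cauchy_schwarz_strict n (fun j => c j * t ^+ j) (fun j => j%:R) 0%N 1%N
  (ltnW lt_1n) lt_1n) => /=.
- by move=> j _; rewrite mulr_ge0 // exprn_ge0 // ltW.
- by rewrite expr0 mulr1.
- by rewrite expr1 mulr_gt0.
- by rewrite eqr_nat.
Qed.

Lemma poly_sum_log_deriv_increasing s t : 0 < s -> s < t ->
  s * p^`().[s] / p.[s] < t * p^`().[t] / p.[t].
Proof.
move=> s_gt0 lt_st; have t_gt0 : 0 < t by exact: lt_trans lt_st.
rewrite ltr_pdivrMr ?poly_sum_gt0 // mulrAC ltr_pdivlMr ?poly_sum_gt0 //.
rewrite !euler_deriv1 !horner_poly_sum.
exact: weighted_mean_increasing (ltW s_gt0) lt_st lt_1n _ c0_gt0 c1_gt0.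
Qed.

End Coefficients.
End PolySum.

Definition gcoef (R : realFieldType) (d k : nat) (j : nat) : R :=
  ('C(d, k))%:R^-1 * ('C(k, j) * 'C(d - k, j))%:R.

Lemma gpoly_poly_sum (R : realFieldType) d k :
  gpoly R d k = poly_sum (d - k).+1 (gcoef R d k).
Proof. by rewrite /gpoly scaler_sumr; apply: eq_bigr => j _; rewrite scalerA. Qed.

Lemma gcoef_ge0 (R : realFieldType) d k j : 0 <= gcoef R d k j.
Proof. by rewrite mulr_ge0 ?invr_ge0 ?ler0n. Qed.

Lemma gcoef_low_gt0 (R : realFieldType) d k : (d < 2 * k)%N -> (k < d)%N ->
  0 < gcoef R d k 0%N /\ 0 < gcoef R d k 1%N.
Proof.
move=> lt_d2k lt_kd.
have Cdk_gt0 : 0 < ('C(d, k))%:R^-1 :> R by rewrite invr_gt0 ltr0n bin_gt0 ltnW.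
have k_gt0 : (0 < k)%N by lia.
rewrite /gcoef !bin0 mulr1 !bin1; split; first exact: Cdk_gt0.
by rewrite mulr_gt0 // ltr0n muln_gt0 k_gt0 subn_gt0.
Qed.

Theorem lemma16 (R : realFieldType) (d k : nat) :
  (d < 2 * k)%N -> (k < d)%N ->
  (forall t : R, 0 < t ->
     (gpoly R d k).[t] * (t * (gpoly R d k)^`(2).[t] + (gpoly R d k)^`().[t])
       > t * ((gpoly R d k)^`().[t]) ^+ 2)
  /\
  (forall s t : R, 0 < s -> s < t ->
     s * (gpoly R d k)^`().[s] / (gpoly R d k).[s]
       < t * (gpoly R d k)^`().[t] / (gpoly R d k).[t]).
Proof.
move=> lt_d2k lt_kd.
have [c0_gt0 c1_gt0] := gcoef_low_gt0 R lt_d2k lt_kd.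
have lt_1n : (1 < (d - k).+1)%N by rewrite ltnS subn_gt0.
rewrite gpoly_poly_sum; split.
- exact: (poly_sum_log_convex lt_1n (@gcoef_ge0 R d k) c0_gt0 c1_gt0).
- exact: (poly_sum_log_deriv_increasing lt_1n (@gcoef_ge0 R d k) c0_gt0 c1_gt0).
Qed.
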